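(* Let $\varphi : D \to C$ be a monic quiver homomorphism with $V(D)\neq\emptyset$. Then $\varphi$ is mono-essential if and only if the following conditions hold: (1) the vertex map $V(\varphi)$ is bijective; (2) if $\mathrm{edges}_D(v,w)\neq\emptyset$ for some $v,w\in V(D)$, then $E(\varphi)(\mathrm{edges}_D(v,w)) = \mathrm{edges}_C(V(\varphi)(v),V(\varphi)(w))$; (3) if $\mathrm{edges}_D(v,w)=\emptyset$ for some $v,w\in V(D)$, then $|\mathrm{edges}_C(V(\varphi)(v),V(\varphi)(w))|\le 1$.
   Context: A quiver is a quadruple $(V,E,\sigma,\tau)$ with $V,E$ sets and $\sigma,\tau : E \to V$ functions (source and target). A quiver homomorphism $\varphi: G \to H$ is a pair $(V(\varphi),E(\varphi))$ of functions on vertices and edges with $V(\varphi)\circ\sigma_G=\sigma_H\circ E(\varphi)$ and $V(\varphi)\circ\tau_G=\tau_H\circ E(\varphi)$; composition is componentwise. A homomorphism is monic (a monomorphism in the category of quivers) iff both its vertex and edge maps are injective. A monic homomorphism $\varphi : D \to C$ is mono-essential if for every quiver $A$ and homomorphism $\alpha : C\to A$, $\alpha\circ\varphi$ monic implies $\alpha$ monic. For a quiver $J$ and $v,w\in V(J)$, $\mathrm{edges}_J(v,w):=\sigma_J^{-1}(v)\cap\tau_J^{-1}(w)$. *)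

Set Implicit Arguments.

Record Quiver := mkQuiver {
  QV : Type;
  QE : Type;
  src : QE -> QV;
  tgt : QE -> QV }.

Record QHom (G H : Quiver) := mkQHom {
  vmap : QV G -> QV H;
  emap : QE G -> QE H;
  vmap_src : forall e, vmap (src G e) = src H (emap e);
  vmap_tgt : forall e, vmap (tgt G e) = tgt H (emap e) }.

Definition qcomp (G H K : Quiver) (b : QHom H K) (a : QHom G H) : QHom G K.
Proof.
  refine (@mkQHom G K (fun v => vmap b (vmap a v)) (fun e => emap b (emap a e)) _ _).
  - intro e. rewrite (vmap_src a e). apply (vmap_src b).
  - intro e. rewrite (vmap_tgt a e). apply (vmap_tgt b).
Defined.

Definition injective_fun (X Y : Type) (f : X -> Y) : Prop :=
  forall x y, f x = f y -> x = y.
Definition surjective_fun (X Y : Type) (f : X -> Y) : Prop :=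
  forall y, exists x, f x = y.
Definition bijective_fun (X Y : Type) (f : X -> Y) : Prop :=
  injective_fun f /\ surjective_fun f.

Definition monic (G H : Quiver) (a : QHom G H) : Prop :=
  injective_fun (vmap a) /\ injective_fun (emap a).

Definition mono_essential (D C : Quiver) (phi : QHom D C) : Prop :=
  monic phi /\
  forall (A : Quiver) (alpha : QHom C A), monic (qcomp alpha phi) -> monic alpha.

Arguments QV : clear implicits.
Definition edges (J : Quiver) (v w : QV J) (e : QE J) : Prop :=
  src J e = v /\ tgt J e = w.
Arguments edges : clear implicits.

(* A vertex of [C] outside the image can be glued onto an image vertex (one exists
   since [V(D)] is nonempty), and an edge outside the image can be redirected onto a
   parallel edge; either collapse keeps [alpha \o phi] monic but not [alpha].
   Conversely, once every vertex lies in the image, two edges identified by [alpha]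
   are parallel, so they are either both in the image (over a pair [v, w] with
   [edges D v w] inhabited) or forced equal by (3). *)

From Stdlib Require Import Classical ClassicalEpsilon.

Definition replace {X : Type} (a b x : X) : X :=
  if excluded_middle_informative (x = a) then b else x.

Lemma replace_at (X : Type) (a b : X) : replace a b a = b.
Proof. unfold replace; destruct excluded_middle_informative; congruence. Qed.

Lemma replace_other (X : Type) (a b x : X) : x <> a -> replace a b x = x.
Proof. unfold replace; destruct excluded_middle_informative; congruence. Qed.

Lemma injective_of_comp_surjective {X Y Z : Type} {f : Y -> Z} {g : X -> Y} :
  surjective_fun g -> injective_fun (fun x => f (g x)) -> injective_fun f.
Proof.
  intros Hg Hfg y1 y2 Hy.
  destruct (Hg y1) as [x1 <-], (Hg y2) as [x2 <-].
  f_equal; apply Hfg; exact Hy.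
Qed.

Lemma edges_map {D C : Quiver} (phi : QHom D C) {v w : QV D} {e : QE D} :
  edges D v w e -> edges C (vmap phi v) (vmap phi w) (emap phi e).
Proof. intros [<- <-]; split; symmetry; [apply vmap_src | apply vmap_tgt]. Qed.

Lemma edges_reflect {D C : Quiver} (phi : QHom D C) {v w : QV D} {e : QE D} :
  injective_fun (vmap phi) ->
  edges C (vmap phi v) (vmap phi w) (emap phi e) -> edges D v w e.
Proof.
  intros Hinj [Hs Ht]; split; apply Hinj.
  - rewrite vmap_src; exact Hs.
  - rewrite vmap_tgt; exact Ht.
Qed.

Lemma emap_eq_parallel {D C : Quiver} (phi : QHom D C) {e1 e2 : QE D} :
  injective_fun (vmap phi) -> emap phi e1 = emap phi e2 ->
  src D e1 = src D e2 /\ tgt D e1 = tgt D e2.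
Proof.
  intros Hinj He; split; apply Hinj; rewrite ?vmap_src, ?vmap_tgt, He; reflexivity.
Qed.

Definition redirect_edge {C : Quiver} {e0 e' : QE C} :
  src C e' = src C e0 -> tgt C e' = tgt C e0 -> QHom C C.
Proof.
  intros Hs Ht.
  refine (@mkQHom C C (fun v => v) (replace e' e0) _ _); intro e;
    (destruct (classic (e = e')) as [-> | Hne];
       [rewrite replace_at | rewrite replace_other]; auto).
Defined.

Definition glue_vertex (C : Quiver) (c v : QV C) : Quiver :=
  @mkQuiver (QV C) (QE C) (fun e => replace c v (src C e)) (fun e => replace c v (tgt C e)).

Definition glue_vertex_hom (C : Quiver) (c v : QV C) : QHom C (glue_vertex C c v) :=
  @mkQHom C (glue_vertex C c v) (replace c v) (fun e => e)
    (fun _ => eq_refl) (fun _ => eq_refl).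

Section Necessity.

Context {D C : Quiver} (phi : QHom D C).
Hypothesis phi_me : mono_essential phi.

Lemma mono_essential_vmap_surjective : inhabited (QV D) -> surjective_fun (vmap phi).
Proof.
  destruct phi_me as [[Hv He] Hess]; intros [d] c.
  apply NNPP; intro Hc.
  assert (Hout : forall x, vmap phi x <> c) by (intros x Hx; apply Hc; eauto).
  assert (Hcomp : monic (qcomp (glue_vertex_hom C c (vmap phi d)) phi)).
  { split; intros x y; simpl; [rewrite !replace_other by apply Hout; apply Hv | apply He]. }
  destruct (Hess _ _ Hcomp) as [Hglue _].
  apply (Hout d); symmetry; apply Hglue; simpl.
  rewrite replace_at, replace_other by apply Hout; reflexivity.
Qed.

Lemma mono_essential_parallel_in_image (e0 e' : QE C) :
  src C e' = src C e0 -> tgt C e' = tgt C e0 ->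
  e' = e0 \/ exists x, emap phi x = e'.
Proof.
  destruct phi_me as [[Hv He] Hess]; intros Hs Ht.
  apply NNPP; intro Hn.
  assert (Hout : forall x, emap phi x <> e') by (intros x Hx; apply Hn; eauto).
  assert (Hcomp : monic (qcomp (redirect_edge Hs Ht) phi)).
  { split; intros x y; simpl; [apply Hv | rewrite !replace_other by apply Hout; apply He]. }
  destruct (Hess _ _ Hcomp) as [_ Hredirect].
  apply Hn; left; apply Hredirect; simpl.
  rewrite replace_at; destruct (classic (e0 = e')) as [-> | Hne];
    [rewrite replace_at | rewrite replace_other]; auto.
Qed.

End Necessity.

Section Sufficiency.

Context {D C : Quiver} (phi : QHom D C).
Hypotheses (phi_monic : monic phi) (vphi_surj : surjective_fun (vmap phi)).
Hypothesis edges_full : forall v w : QV D, (exists e, edges D v w e) ->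
  forall e' : QE C, edges C (vmap phi v) (vmap phi w) e' ->
    exists e, edges D v w e /\ emap phi e = e'.
Hypothesis edges_thin : forall v w : QV D, ~ (exists e, edges D v w e) ->
  forall e1 e2 : QE C, edges C (vmap phi v) (vmap phi w) e1 ->
    edges C (vmap phi v) (vmap phi w) e2 -> e1 = e2.

Lemma mono_essential_of_vmap_surjective : mono_essential phi.
Proof.
  split; [exact phi_monic |]; intros A alpha [Hcv Hce].
  assert (Hav : injective_fun (vmap alpha))
    by exact (injective_of_comp_surjective vphi_surj Hcv).
  split; [exact Hav |]; intros e1 e2 Heq.
  destruct (emap_eq_parallel alpha Hav Heq) as [Hs Ht].
  destruct (vphi_surj (src C e1)) as [v Hv], (vphi_surj (tgt C e1)) as [w Hw].
  assert (H1 : edges C (vmap phi v) (vmap phi w) e1) by (split; symmetry; assumption).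
  assert (H2 : edges C (vmap phi v) (vmap phi w) e2) by (split; congruence).
  destruct (classic (exists e, edges D v w e)) as [Hvw | Hvw].
  - destruct (edges_full v w Hvw e1 H1) as [d1 [_ <-]],
      (edges_full v w Hvw e2 H2) as [d2 [_ <-]].
    f_equal; apply Hce; exact Heq.
  - exact (edges_thin v w Hvw e1 e2 H1 H2).
Qed.

End Sufficiency.

Theorem mainTheorem4 (D C : Quiver) (phi : QHom D C) :
  monic phi -> inhabited (QV D) ->
  (mono_essential phi <->
   (bijective_fun (vmap phi) /\
    (forall v w : QV D, (exists e, edges D v w e) ->
       forall e' : QE C, edges C (vmap phi v) (vmap phi w) e' <->
         exists e, edges D v w e /\ emap phi e = e') /\
    (forall v w : QV D, ~ (exists e, edges D v w e) ->
       forall e1 e2 : QE C, edges C (vmap phi v) (vmap phi w) e1 ->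
         edges C (vmap phi v) (vmap phi w) e2 -> e1 = e2))).
Proof.
  intros Hm HD; split.
  - intro Hme; split; [| split].
    + exact (conj (proj1 Hm) (mono_essential_vmap_surjective phi Hme HD)).
    + intros v w [e He] e'; split.
      * intros [Hs Ht].
        destruct (edges_map phi He) as [Hs0 Ht0].
        destruct (mono_essential_parallel_in_image phi Hme (emap phi e) e')
          as [-> | [x <-]]; [congruence | congruence | exists e; auto |].
        exists x; split; [apply (edges_reflect phi (proj1 Hm)); split |]; auto.
      * intros [x [Hx <-]]; exact (edges_map phi Hx).
    + intros v w Hvw e1 e2 [Hs1 Ht1] [Hs2 Ht2].
      destruct (mono_essential_parallel_in_image phi Hme e1 e2)
        as [-> | [x Hx]]; try congruence.
      exfalso; apply Hvw; exists x.
      apply (edges_reflect phi (proj1 Hm)); rewrite Hx; split; assumption.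
  - intros [[_ Hsurj] [Hfull Hthin]].
    apply (mono_essential_of_vmap_surjective phi Hm Hsurj); [| exact Hthin].
    intros v w Hvw e'; apply (proj1 (Hfull v w Hvw e')).
Qed.
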